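(* Let $n\ge 1$ and let $W\in\mathbb{C}^{2n\times 2n}$ be a normal skew-Hamiltonian matrix all of whose eigenvalues have nonzero imaginary parts. Then there exist a unitary symplectic matrix $U\in\mathbb{C}^{2n\times 2n}$ and a diagonal matrix $D\in\mathbb{C}^{n\times n}$ such that $$W=U\begin{bmatrix} D & 0\\ 0 & D^H\end{bmatrix}U^H .$$
   Context: Let $J=J_{2n}=\begin{bmatrix}0 & I_n\\ -I_n & 0\end{bmatrix}\in\mathbb{R}^{2n\times 2n}$. A matrix $A\in\mathbb{C}^{2n\times 2n}$ is Hamiltonian if $(JA)^H=JA$ and skew-Hamiltonian if $(JA)^H=-JA$. A matrix $Z\in\mathbb{C}^{2n\times 2n}$ is symplectic if $Z^HJZ=J$. ''Unitary symplectic'' means both unitary and symplectic. *)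

(* The complex field C is modelled by an arbitrary
   numClosedFieldType (algebraically closed field with conjugation, e.g. algC);
   conjugate transpose, unitary and normal matrices come from
   mathcomp/algebra/spectral.v ( M ^t* , unitarymx, normalmx ). *)
From HB Require Import structures.
From mathcomp Require Import all_boot all_order all_algebra.
Set Implicit Arguments. Unset Strict Implicit. Unset Printing Implicit Defensive.
Import Order.TTheory GRing.Theory Num.Theory.
Local Open Scope ring_scope.
Local Open Scope sesquilinear_scope.

Definition Jmx (C : numClosedFieldType) n : 'M[C]_(n + n) :=
  block_mx 0 1%:M (- 1%:M) 0.

Definition skew_hamiltonian (C : numClosedFieldType) n (A : 'M[C]_(n + n)) : Prop :=
  (Jmx C n *m A) ^t* = - (Jmx C n *m A).

Definition symplecticmx (C : numClosedFieldType) n (Z : 'M[C]_(n + n)) : Prop :=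
  Z ^t* *m Jmx C n *m Z = Jmx C n.

From HB Require Import structures.
From mathcomp Require Import all_boot all_order all_algebra.
Set Implicit Arguments. Unset Strict Implicit. Unset Printing Implicit Defensive.
Import Order.TTheory GRing.Theory Num.Theory Num.Def.
Local Open Scope ring_scope.
Local Open Scope sesquilinear_scope.

(* Diagonalise [W] unitarily, [P W P^* = diag d].  Skew-Hamiltonicity reads
   [W^* J = J W], so the unitary [M = P J P^*] satisfies
   [conj d_i M_ij = M_ij d_j]: it only couples eigenvalues lying in opposite
   half planes.  Its rows indexed by the lower half plane are therefore
   orthonormal vectors supported on the upper one, so at least [n] eigenvalues
   have positive imaginary part.  The corresponding [n] rows [Q] of [P]
   satisfy [Q J Q^* = 0], and then [[Q; Q J]] is unitary, symplectic, and
   conjugates [W] to the block diagonal matrix with blocks [D] and [D^*]. *)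

Section Adjoint.
Variable C : numClosedFieldType.

Lemma adjmx_mul m n p (A : 'M[C]_(m, n)) (B : 'M[C]_(n, p)) :
  (A *m B)^t* = B^t* *m A^t*.
Proof. by rewrite trmx_mul map_mxM. Qed.

Lemma adj_diag_mx n (d : 'rV[C]_n) : (diag_mx d)^t* = diag_mx (map_mx conjC d).
Proof. by rewrite tr_diag_mx map_diag_mx. Qed.

Lemma unitarymx_adjK n (P : 'M[C]_n) : P \is unitarymx -> P^t* *m P = 1%:M.
Proof. by move/unitarymxP/mulmx1C. Qed.

Lemma rowsub_unitary m n p (f : 'I_p -> 'I_m) (A : 'M[C]_(m, n)) :
  injective f -> A \is unitarymx -> rowsub f A \is unitarymx.
Proof.
move=> f_inj /unitarymxP AA1; apply/unitarymxP.
rewrite trmx_mxsub map_mxsub -mxsub_mul AA1.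
by apply/matrixP => i j; rewrite !mxE (inj_eq f_inj).
Qed.

Lemma rowsub_diag_mul m n p (f : 'I_p -> 'I_m) (d : 'rV[C]_m) (A : 'M[C]_(m, n)) :
  rowsub f (diag_mx d *m A) = diag_mx (colsub f d) *m rowsub f A.
Proof. by rewrite !mul_diag_mx; apply/matrixP => i j; rewrite !mxE. Qed.

Lemma colsub_enum_mul_rowsub k m (S : {pred 'I_m}) (A : 'M[C]_(k, m)) :
  (forall a j, j \notin S -> A a j = 0) ->
  colsub (@enum_val _ S) A *m rowsub (@enum_val _ S) 1%:M = A.
Proof.
move=> A_supp; apply/matrixP => a j; rewrite !mxE.
have [jS|jNS] := boolP (j \in S); last first.
  rewrite A_supp // big1 // => i _; rewrite !mxE.
  by case: eqP => [hij|]; [move: jNS; rewrite -hij enum_valP | rewrite mulr0].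
rewrite (bigD1 (enum_rank_in jS j)) //= !mxE enum_rankK_in // eqxx mulr1.
rewrite big1 ?addr0 // => i ne_i; rewrite !mxE; case: eqP => [hij|]; last by rewrite mulr0.
by move: ne_i; rewrite -(inj_eq enum_val_inj) enum_rankK_in // hij eqxx.
Qed.

(* The rows of [M] outside [S] are orthonormal and supported on [S]. *)
Lemma unitarymx_card_predC m (M : 'M[C]_m) (S : {pred 'I_m}) :
  M \is unitarymx -> (forall i j, i \notin S -> j \notin S -> M i j = 0) ->
  (#|[predC S]| <= #|S|)%N.
Proof.
move=> MU M_supp; set R := rowsub (@enum_val _ [predC S]) M.
have RU : R \is unitarymx by apply: rowsub_unitary => //; apply: enum_val_inj.
have R_supp a j : j \notin S -> R a j = 0.
  by move=> jNS; rewrite mxE M_supp //; have := enum_valP a; rewrite inE.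
rewrite -(mxrank_unitary RU) -(colsub_enum_mul_rowsub R_supp).
exact: leq_trans (mxrankM_maxl _ _) (rank_leq_col _).
Qed.

End Adjoint.

Section IsotropicFrame.
Variables (C : numClosedFieldType) (n : nat).
Local Notation J := (Jmx C n).

Lemma Jmx_adj : J^t* = - J.
Proof.
rewrite /Jmx tr_block_mx map_block_mx !trmx0 !map_mx0 linearN /= map_mxN.
by rewrite trmx1 map_mx1 opp_block_mx !oppr0 opprK.
Qed.

Lemma mulJmx : J *m J = - 1%:M.
Proof.
rewrite /Jmx mulmx_block !mulmx0 !mul0mx !mulmx1 !mulmxN !mulmx1 !add0r !addr0.
by rewrite (scalar_mx_block n n 1) opp_block_mx oppr0.
Qed.

Lemma mulmx_Jmx_adj : J *m J^t* = 1%:M.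
Proof. by rewrite Jmx_adj mulmxN mulJmx opprK. Qed.

Lemma Jmx_unitary : J \is unitarymx.
Proof. exact/unitarymxP/mulmx_Jmx_adj. Qed.

Lemma skew_hamiltonian_adjJ (W : 'M[C]_(n + n)) :
  skew_hamiltonian W -> W^t* *m J = J *m W.
Proof. by rewrite /skew_hamiltonian adjmx_mul Jmx_adj mulmxN => /oppr_inj. Qed.

Lemma isotropic_frame_mul (Q : 'M[C]_(n, n + n)) (W : 'M[C]_(n + n)) (D : 'M[C]_n) :
    W^t* *m J = J *m W -> Q *m W = D *m Q -> Q *m W^t* = D^t* *m Q ->
  col_mx Q (Q *m J) *m W = block_mx D 0 0 (D^t*) *m col_mx Q (Q *m J).
Proof.
move=> WJ QW QWt; rewrite mul_col_mx mul_block_col !mul0mx addr0 add0r.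
by rewrite -mulmxA -WJ mulmxA QWt mulmxA QW.
Qed.

Variable Q : 'M[C]_(n, n + n).
Hypotheses (QU : Q \is unitarymx) (Q_isotropic : Q *m J *m Q^t* = 0).

Lemma adj_col_mx_isotropic :
  (col_mx Q (Q *m J))^t* = row_mx (Q^t*) (J^t* *m Q^t*).
Proof. by rewrite tr_col_mx map_row_mx adjmx_mul. Qed.

Lemma isotropic_frame_unitary : col_mx Q (Q *m J) \is unitarymx.
Proof.
have QJJt : Q *m J *m J^t* = Q by rewrite -mulmxA mulmx_Jmx_adj mulmx1.
apply/unitarymxP; rewrite adj_col_mx_isotropic mul_col_row !mulmxA QJJt.
rewrite (unitarymxP QU) Jmx_adj mulmxN mulNmx Q_isotropic oppr0.
by rewrite -scalar_mx_block.
Qed.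

Lemma isotropic_frame_symplectic : symplecticmx ((col_mx Q (Q *m J))^t*).
Proof.
have QJJ : Q *m J *m J = - Q by rewrite -mulmxA mulJmx mulmxN mulmx1.
have QJJt : Q *m J *m J^t* = Q by rewrite -mulmxA mulmx_Jmx_adj mulmx1.
rewrite /symplecticmx trmxCK adj_col_mx_isotropic mul_col_mx mul_col_row.
rewrite !mulmxA QJJt QJJ !mulNmx Jmx_adj mulmxN mulNmx opprK.
by rewrite Q_isotropic (unitarymxP QU).
Qed.

End IsotropicFrame.

Section NormalSpectral.
Variables (C : numClosedFieldType) (m : nat) (W : 'M[C]_m).
Hypothesis W_normal : W \is normalmx.
Local Notation P := (spectralmx W).
Local Notation d := (spectral_diag W).

Lemma spectral_decomposition : W = P^t* *m diag_mx d *m P.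
Proof. by rewrite {1}(orthomx_spectralP W_normal) invmx_unitary ?spectral_unitarymx. Qed.

Lemma spectral_mul : P *m W = diag_mx d *m P.
Proof.
rewrite [X in P *m X]spectral_decomposition !mulmxA.
by rewrite (unitarymxP (spectral_unitarymx W)) mul1mx.
Qed.

Lemma spectral_mul_adj : P *m W^t* = diag_mx (map_mx conjC d) *m P.
Proof.
rewrite [X in P *m X^t*]spectral_decomposition !adjmx_mul trmxCK adj_diag_mx !mulmxA.
by rewrite (unitarymxP (spectral_unitarymx W)) mul1mx.
Qed.

Lemma adj_spectral_mul : W *m P^t* = P^t* *m diag_mx d.
Proof.
rewrite [X in X *m _]spectral_decomposition -!mulmxA.
by rewrite (unitarymxP (spectral_unitarymx W)) mulmx1.
Qed.

Lemma spectral_eigenvalue i : eigenvalue W (d 0 i).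
Proof.
apply/eigenvalueP; exists (row i P).
  by rewrite -row_mul spectral_mul mul_diag_mx; apply/rowP => j; rewrite !mxE.
apply/eqP => Pi0.
have := congr1 (fun v => (v *m P^t*) 0 i) Pi0.
rewrite /= -row_mul (unitarymxP (spectral_unitarymx W)) mul0mx !mxE eqxx.
by move/eqP; rewrite oner_eq0.
Qed.

End NormalSpectral.

Section SkewHamiltonianSpectral.
Variables (C : numClosedFieldType) (n : nat) (W : 'M[C]_(n + n)).
Hypotheses (W_normal : W \is normalmx) (W_skew : skew_hamiltonian W).
Local Notation J := (Jmx C n).
Local Notation P := (spectralmx W).
Local Notation d := (spectral_diag W).

Lemma spectral_Jmx_intertwine :
  diag_mx (map_mx conjC d) *m (P *m J *m P^t*) = (P *m J *m P^t*) *m diag_mx d.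
Proof.
rewrite !mulmxA -spectral_mul_adj // -(mulmxA P) skew_hamiltonian_adjJ //.
by rewrite -!mulmxA adj_spectral_mul.
Qed.

Lemma spectral_Jmx_neq0 i j :
  (P *m J *m P^t*) i j != 0 -> (d 0 i)^* = d 0 j.
Proof.
move=> Mij_neq0; have /matrixP/(_ i j) := spectral_Jmx_intertwine.
rewrite mul_diag_mx mul_mx_diag [LHS]mxE [RHS]mxE [in LHS]mxE mulrC.
exact: mulfI.
Qed.

Hypothesis W_Im : forall lambda : C, eigenvalue W lambda -> 'Im lambda != 0.

Lemma spectral_Jmx_support i j :
  (0 < 'Im (d 0 i)) = (0 < 'Im (d 0 j)) -> (P *m J *m P^t*) i j = 0.
Proof.
move=> same_sign; have [//|/spectral_Jmx_neq0 dij] := eqVneq ((P *m J *m P^t*) i j) 0.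
move: same_sign; rewrite -dij Im_conj oppr_gt0.
have := W_Im (spectral_eigenvalue W_normal i).
by rewrite real_neqr_lt ?Creal_Im // => /orP[] lt0 => [|/esym]; rewrite lt0 lt_gtF.
Qed.

Lemma spectral_Im_gt0_card : (n <= #|[pred i | (0 < 'Im (d 0 i))%R]|)%N.
Proof.
set S := [pred i | 0 < 'Im (d 0 i)].
have MU : P *m J *m P^t* \is unitarymx.
  by rewrite !mul_unitarymx ?trmxC_unitary ?spectral_unitarymx ?Jmx_unitary.
have predC_le_S : (#|[predC S]| <= #|S|)%N.
  apply: unitarymx_card_predC MU _ => i j; rewrite !inE => /negbTE iNS /negbTE jNS.
  by apply: spectral_Jmx_support; rewrite iNS jNS.
have := cardC S; rewrite card_ord => cardS.
by rewrite -leq_double -!addnn -{1}cardS leq_add2l.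
Qed.

Lemma rowsub_spectral_isotropic p (f : 'I_p -> 'I_(n + n)) :
  (forall k, 0 < 'Im (d 0 (f k))) -> rowsub f P *m J *m (rowsub f P)^t* = 0.
Proof.
move=> f_gt0; rewrite trmx_mxsub map_mxsub mul_rowsub_mx -mxsub_mul.
by apply/matrixP => i j; rewrite mxE [RHS]mxE spectral_Jmx_support ?f_gt0.
Qed.

End SkewHamiltonianSpectral.

Theorem lemma2p2 (C : numClosedFieldType) (n : nat) (W : 'M[C]_(n + n)) :
  (0 < n)%N ->
  W \is normalmx ->
  skew_hamiltonian W ->
  (forall lambda : C, eigenvalue W lambda -> 'Im lambda != 0) ->
  exists (U : 'M[C]_(n + n)) (D : 'M[C]_n),
    [/\ U \is unitarymx, symplecticmx U, is_diag_mx D &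
        W = U *m block_mx D 0 0 (D ^t*) *m U ^t*].
Proof.
move=> _ W_normal W_skew W_Im.
set P := spectralmx W; set d := spectral_diag W.
have n_le := spectral_Im_gt0_card W_normal W_skew W_Im.
pose f i : 'I_(n + n) := enum_val (widen_ord n_le i).
have f_inj : injective f by move=> i j /enum_val_inj /(congr1 val) /= /val_inj.
have f_gt0 k : 0 < 'Im (d 0 (f k)).
  by have := enum_valP (widen_ord n_le k); rewrite inE.
pose Q := rowsub f P; pose D := diag_mx (colsub f d).
have QU : Q \is unitarymx := rowsub_unitary f_inj (spectral_unitarymx W).
have Q_isotropic := rowsub_spectral_isotropic W_normal W_skew W_Im f_gt0.
have QW : Q *m W = D *m Q by rewrite mul_rowsub_mx spectral_mul // rowsub_diag_mul.
have QWt : Q *m W^t* = D^t* *m Q.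
  by rewrite adj_diag_mx map_mxsub mul_rowsub_mx spectral_mul_adj // rowsub_diag_mul.
have VU := isotropic_frame_unitary QU Q_isotropic.
exists ((col_mx Q (Q *m Jmx C n))^t*), D; split.
- by rewrite trmxC_unitary.
- exact: isotropic_frame_symplectic.
- exact: diag_mx_is_diag.
rewrite trmxCK -mulmxA -(isotropic_frame_mul (skew_hamiltonian_adjJ W_skew) QW QWt).
by rewrite mulmxA unitarymx_adjK ?trmxC_unitary // mul1mx.
Qed.
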